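(* The signature of any matchings circuit is windable.
   Context: A matchings circuit $G$ consists of: a finite set $J$ of incidences; a finite vertex set $V$ with sets $J_v$ partitioning $J$; a set $A\subseteq J$ of external edges; a partition $E$ of $J\setminus A$ into pairs (internal edges); a rational edge-weight $w(e)\ge0$ for each $e\in E$; and a rational fugacity $\lambda(v)\ge0$ for each $v$. For $F\subseteq A\cup E$, $\deg_F(v)$ is the number of incidences in $J_v$ belonging to edges of $F$; $\mathrm{wt}_G(F)=0$ if some $\deg_F(v)\ge2$, else $\prod_{v:\deg_F(v)=0}\lambda(v)\prod_{e\in F\cap E}w(e)$. The signature $[\![G]\!]:\{0,1\}^A\to\mathbb{Q}_{\ge0}$ is $[\![G]\!](x)=\sum\mathrm{wt}_G(F)$ over $F\subseteq A\cup E$ with $F\cap A=\{a:x_a=1\}$. For $x,y\in\{0,1\}^A$, $x\oplus y$ is coordinatewise addition mod 2, $\mathbf S$ the characteristic vector of $S$; $\mathrm{Match}'(z)$ is the set of partitions of $\{i:z_i=1\}$ into blocks of size 1 or 2. $F:\{0,1\}^A\to\mathbb{Q}_{\ge0}$ is windable if there exist $B(x,y,M)\ge0$ for all $x,y$ and $M\in\mathrm{Match}'(x\oplus y)$ with $F(x)F(y)=\sum_{M\in\mathrm{Match}'(x\oplus y)}B(x,y,M)$ for all $x,y$, and $B(x,y,M)=B(x\oplus\mathbf S,y\oplus\mathbf S,M)$ for all $x,y$ and all $S\in M\in\mathrm{Match}'(x\oplus y)$. *)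

From HB Require Import structures.
From mathcomp Require Import all_boot all_order all_algebra.
Set Implicit Arguments. Unset Strict Implicit. Unset Printing Implicit Defensive.
Import Order.TTheory GRing.Theory Num.Theory.
Local Open Scope ring_scope.

(* A matchings circuit: incidences J (finType), vertices V (finType),
   vtx : J -> V gives the partition J = disjoint union of J_v := vtx^-1(v),
   A : {set J} external edges (each a single incidence),
   E : {set {set J}} internal edges, a partition of J \ A into 2-element sets,
   w : edge weights, lam : fugacities. *)

(* x (+) y on {0,1}^A, with vectors represented as subsets of A *)
Definition symdiff (T : finType) (x y : {set T}) : {set T} :=
  (x :\: y) :|: (y :\: x).

Definition degF (J V : finType) (vtx : J -> V) (x : {set J})
  (Fe : {set {set J}}) (v : V) : nat :=
  #|[set j in x :|: cover Fe | vtx j == v]|.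

Definition wtG (J V : finType) (vtx : J -> V) (w : {set J} -> rat)
  (lam : V -> rat) (x : {set J}) (Fe : {set {set J}}) : rat :=
  if [exists v, 2 <= degF vtx x Fe v]%N then 0
  else (\prod_(v | degF vtx x Fe v == 0%N) lam v) * \prod_(e in Fe) w e.

(* signature [[G]](x) for x \subset A: sum over F subset of A u E with
   F n A = x, i.e. over sets Fe of internal edges *)
Definition signature (J V : finType) (vtx : J -> V) (E : {set {set J}})
  (w : {set J} -> rat) (lam : V -> rat) (x : {set J}) : rat :=
  \sum_(Fe : {set {set J}} | Fe \subset E) wtG vtx w lam x Fe.

Definition is_matching_circuit (J V : finType) (vtx : J -> V) (A : {set J})
  (E : {set {set J}}) (w : {set J} -> rat) (lam : V -> rat) : Prop :=
  [/\ partition E (~: A), (forall e, e \in E -> #|e| = 2%N),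
      (forall e, e \in E -> 0 <= w e) & (forall v, 0 <= lam v)].

Definition Match' (T : finType) (z : {set T}) (M : {set {set T}}) : bool :=
  partition M z && [forall S in M, (#|S| == 1%N) || (#|S| == 2%N)].

Definition windable (T : finType) (A : {set T}) (F : {set T} -> rat) : Prop :=
  exists B : {set T} -> {set T} -> {set {set T}} -> rat,
    [/\ (forall (x y : {set T}) (M : {set {set T}}), x \subset A -> y \subset A -> Match' (symdiff x y) M ->
           0 <= B x y M),
        (forall x y : {set T}, x \subset A -> y \subset A ->
           F x * F y = \sum_(M : {set {set T}} | Match' (symdiff x y) M) B x y M)
      & (forall (x y S : {set T}) (M : {set {set T}}), x \subset A -> y \subset A -> Match' (symdiff x y) M ->
           S \in M -> B x y M = B (symdiff x S) (symdiff y S) M)].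

From HB Require Import structures.
From mathcomp Require Import all_boot all_order all_algebra.
From mathcomp Require Import zify.
Set Implicit Arguments. Unset Strict Implicit. Unset Printing Implicit Defensive.
Import Order.TTheory GRing.Theory Num.Theory.

(* Write [occupied x F] for the incidences used by the configuration
   consisting of the external edges x and the internal edges F; it is
   valid when every vertex carries at most one occupied incidence.  For
   two valid configurations (x, F1) and (y, F2) the disagreement set
   K = occupied x F1 (+) occupied y F2 has at most two incidences per
   vertex.  On K we compose two involutions: [mate], exchanging the two
   ends of an internal edge (fixing external edges), and [vertex_mate K],
   exchanging the two incidences of K at a vertex.  The orbits of their
   product [step K] are the alternating paths and cycles; by a general
   fact on products of involutions, an orbit contains at most two fixed
   points of [mate], so the orbits meeting A split x (+) y into blocks of
   size 1 or 2: this is the matching [path_matching K] in Match'(x (+) y).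

   The weight B(x,y,M) is the total weight of pairs of valid
   configurations whose path matching is M.  For a block S of M,
   [flip] exchanges the internal edges of the two configurations along
   the orbit of S and replaces x, y by x (+) S, y (+) S; it is an
   involutive, weight-preserving bijection between the pairs counted by
   B(x,y,M) and those counted by B(x (+) S, y (+) S, M), which gives the
   winding identity.  Summing B(x,y,M) over M gives [[G]](x) [[G]](y). *)

Section ProductOfInvolutions.
Variable T : finType.
Variables inv1 inv2 : T -> T.
Hypothesis inv1K : involutive inv1.
Hypothesis inv2K : involutive inv2.

Definition inv_product (j : T) := inv1 (inv2 j).
Local Notation rho := inv_product.

Lemma inv_product_inj : injective rho.
Proof.
move=> a b; rewrite /inv_product => h.
by rewrite -[a]inv2K -[b]inv2K -[inv2 a]inv1K h inv1K.
Qed.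

(* inv1 conjugates rho to its inverse: rho^k (inv1 (rho^k j)) = inv1 j. *)
Lemma iter_inv_product_conj k j : iter k rho (inv1 (iter k rho j)) = inv1 j.
Proof.
elim: k j => [|k IH] j //; rewrite [iter k.+1 rho j]/= iterSr.
have -> : rho (inv1 (rho (iter k rho j))) = inv1 (iter k rho j).
  by rewrite /inv_product inv1K inv2K.
exact: IH.
Qed.

Lemma inv1_fixed_in_orbit a b : inv1 a = a -> fconnect rho a b -> inv1 b = b ->
  b \in [set a; iter (order rho a)./2 rho a].
Proof.
move=> fix_a ab fix_b.
have := iter_findex ab; set k := findex rho a b => bk.
have k_lt : k < order rho a by apply: findex_max.
have back : iter (k + k) rho a = a.
  by rewrite iterD bk -{1}fix_b -{1}bk iter_inv_product_conj fix_a.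
have period := iter_order inv_product_inj a.
set n := order rho a in k_lt period *.
have f0 := findex0 rho a.
rewrite !inE -bk; case: (ltnP (k + k) n) => h.
  have := findex_iter h; rewrite back f0 => k0.
  by apply/orP; left; apply/eqP; have -> : k = 0 by lia.
have h2 : k + k - n < n by lia.
have back' : iter (k + k - n) rho a = a.
  by rewrite -{2}back -[in RHS](subnK h) iterD period.
have := findex_iter h2; rewrite back' f0 => k0.
have -> : n = k.*2 by rewrite -addnn; lia.
by rewrite doubleK eqxx orbT.
Qed.

Lemma card_inv1_fixed_in_orbit a : inv1 a = a ->
  #|[set b | fconnect rho a b & inv1 b == b]| <= 2.
Proof.
move=> fix_a.
apply: leq_trans (_ : #|[set a; iter (order rho a)./2 rho a]| <= 2).
  apply: subset_leq_card; apply/subsetP => b; rewrite inE => /andP[ab /eqP fix_b].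
  exact: inv1_fixed_in_orbit.
by rewrite cards2; case: eqP.
Qed.

Lemma orbit_inv1_closed a b : inv1 a = a -> fconnect rho a b -> fconnect rho a (inv1 b).
Proof.
move=> fix_a ab; have := iter_findex ab; set k := findex rho a b => bk.
rewrite fconnect_sym; last exact: inv_product_inj.
have <- : iter k rho (inv1 b) = a by rewrite -bk iter_inv_product_conj fix_a.
exact: fconnect_iter.
Qed.

End ProductOfInvolutions.

Lemma in_symdiff (T : finType) (x y : {set T}) j :
  (j \in symdiff x y) = (j \in x) (+) (j \in y).
Proof. by rewrite !inE; case: (j \in x); case: (j \in y). Qed.

Lemma symdiffK (T : finType) (x y : {set T}) : symdiff (symdiff x y) y = x.
Proof. by apply/setP => j; rewrite !in_symdiff -addbA addbb addbF. Qed.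

Lemma symdiffC (T : finType) (x y : {set T}) : symdiff x y = symdiff y x.
Proof. by apply/setP => j; rewrite !in_symdiff addbC. Qed.

Lemma symdiff_subset (T : finType) (x y A : {set T}) :
  x \subset A -> y \subset A -> symdiff x y \subset A.
Proof.
move=> xA yA; apply/subsetP => j; rewrite in_symdiff.
by case jx: (j \in x); case jy: (j \in y) => //= _; [exact: (subsetP xA) | exact: (subsetP yA)].
Qed.

Lemma mulr_prod_cond (I : finType) (R : comPzRingType) (P Q : pred I) (f : I -> R) :
  ((\prod_(i | P i) f i) * (\prod_(i | Q i) f i) =
   \prod_i ((if P i then f i else 1) * (if Q i then f i else 1)))%R.
Proof. by rewrite big_split /= -!big_mkcond. Qed.

Section VertexMate.
Variables (J V : finType) (vtx : J -> V).

Definition fibre (K : {set J}) v := [set j in K | vtx j == v].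

Definition vertex_mate (K : {set J}) j :=
  if j \in K then odflt j [pick j' in K | (vtx j' == vtx j) && (j' != j)] else j.

Lemma in_fibre (K : {set J}) v j : (j \in fibre K v) = (j \in K) && (vtx j == v).
Proof. by rewrite inE. Qed.

Lemma vertex_mate_in K j : (vertex_mate K j \in K) = (j \in K).
Proof.
rewrite /vertex_mate; case: (boolP (j \in K)) => jK; last by rewrite (negbTE jK).
by case: pickP => [i /andP[] | _] /=; rewrite ?jK.
Qed.

Lemma vtx_vertex_mate K j : vtx (vertex_mate K j) = vtx j.
Proof.
rewrite /vertex_mate; case: (j \in K) => //.
by case: pickP => [i /and3P[_ /eqP] | _] /=.
Qed.

Variable K : {set J}.
Hypothesis fibre_le2 : forall v, #|fibre K v| <= 2.

Lemma vertex_mate_spec j : j \in K ->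
  (vertex_mate K j = j /\ fibre K (vtx j) = [set j]) \/
  (vertex_mate K j != j /\ fibre K (vtx j) = [set j; vertex_mate K j]).
Proof.
move=> jK; rewrite /vertex_mate jK.
case: pickP => [i /and3P[iK /eqP iv nij] | none] /=.
  right; split => //; apply/eqP; rewrite eq_sym eqEcard; apply/andP; split.
    by apply/subsetP => k; rewrite !inE => /orP[] /eqP ->; rewrite ?jK ?iK ?iv eqxx.
  by apply: leq_trans (fibre_le2 _) _; rewrite cards2 eq_sym nij.
left; split => //; apply/setP => k; rewrite !inE.
apply/andP/eqP => [[kK /eqP kv]|->]; last by rewrite jK eqxx.
apply/eqP/negPn/negP => nkj.
by have := none k; rewrite kK kv eqxx nkj.
Qed.

Lemma fibre_vertex_mate j : j \in K -> fibre K (vtx j) = [set j; vertex_mate K j].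
Proof. by move=> jK; case: (vertex_mate_spec jK) => [[-> ->]|[_ ->]] //; rewrite setUid. Qed.

Lemma vertex_mateK : involutive (vertex_mate K).
Proof.
move=> j; case: (boolP (j \in K)) => jK; last by rewrite /vertex_mate (negbTE jK) (negbTE jK).
case: (vertex_mate_spec jK) => [[fix_j _]|[nj dj]]; first by rewrite !fix_j.
have jK' : vertex_mate K j \in K by rewrite vertex_mate_in.
have j_in : j \in fibre K (vtx (vertex_mate K j)) by rewrite vtx_vertex_mate inE jK eqxx.
case: (vertex_mate_spec jK') => [[_ d1]|[n1 d1]].
  by move: j_in nj; rewrite d1 inE => /eqP ej; rewrite -ej eqxx.
have : vertex_mate K (vertex_mate K j) \in fibre K (vtx (vertex_mate K j)).
  by rewrite d1 !inE eqxx orbT.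
by rewrite vtx_vertex_mate dj !inE (negbTE n1) orbF => /eqP.
Qed.

End VertexMate.

Section MatchingsCircuit.
Variables (J V : finType) (vtx : J -> V) (A : {set J}) (E : {set {set J}})
  (w : {set J} -> rat) (lam : V -> rat).
Hypothesis circuit : is_matching_circuit vtx A E w lam.

Let cover_E : cover E = ~: A.
Proof. by case: circuit => /and3P[/eqP -> _ _]. Qed.
Let trivI_E : trivIset E.
Proof. by case: circuit => /and3P[_ -> _]. Qed.
Let card_edge e : e \in E -> #|e| = 2.
Proof. by case: circuit => _ h _ _; apply: h. Qed.

Definition mate j := if j \in A then j else odflt j [pick j' in pblock E j | j' != j].

Lemma mate_A j : j \in A -> mate j = j.
Proof. by rewrite /mate => ->. Qed.

Lemma mate_spec j : j \notin A ->
  [/\ pblock E j \in E, pblock E j = [set j; mate j], mate j != j &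
      pblock E (mate j) = pblock E j].
Proof.
move=> jA; have jc : j \in cover E by rewrite cover_E inE.
have eE := pblock_mem jc; have je : j \in pblock E j by rewrite mem_pblock.
have c2 := card_edge eE.
rewrite /mate (negbTE jA); case: pickP => [j' /andP[j'e nj] | none] /=.
  have de : pblock E j = [set j; j'].
    apply/eqP; rewrite eq_sym eqEcard; apply/andP; split.
      by apply/subsetP => i; rewrite !inE => /orP[] /eqP ->.
    by rewrite c2 cards2 eq_sym nj.
  by split => //; apply: def_pblock.
exfalso; have : pblock E j \subset [set j].
  apply/subsetP => i ie; rewrite inE; apply/negPn/negP => nij.
  by have := none i; rewrite ie nij.
by move/subset_leq_card; rewrite c2 cards1.
Qed.

Lemma mate_notin_A j : j \notin A -> mate j \notin A.
Proof.
move=> jA; case: (mate_spec jA) => eE de _ _.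
suff : mate j \in cover E by rewrite cover_E inE.
by apply/bigcupP; exists (pblock E j) => //; rewrite de !inE eqxx orbT.
Qed.

Lemma mateK : involutive mate.
Proof.
move=> j; case: (boolP (j \in A)) => jA; first by rewrite !mate_A.
case: (mate_spec jA) => _ d1 _ p1.
case: (mate_spec (mate_notin_A jA)) => _ d2 n2 _.
have : mate (mate j) \in [set j; mate j] by rewrite -d1 -p1 d2 !inE eqxx orbT.
by rewrite !inE (negbTE n2) orbF => /eqP.
Qed.

Definition occupied (x : {set J}) (F : {set {set J}}) := x :|: cover F.

Lemma in_occupied (x : {set J}) (F : {set {set J}}) j : x \subset A -> F \subset E ->
  (j \in occupied x F) = if j \in A then j \in x else pblock E j \in F.
Proof.
move=> xA FE; rewrite /occupied inE; case: (boolP (j \in A)) => jA.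
  case: (boolP (j \in cover F)); rewrite ?orbF ?orbT // => /bigcupP[e eF je].
  have : j \in cover E by apply/bigcupP; exists e => //; apply: (subsetP FE).
  by rewrite cover_E inE jA.
have -> : (j \in x) = false by apply/negbTE; apply: contra jA; apply: (subsetP xA).
apply/bigcupP/idP => [[e eF je]|pF]; first by rewrite (def_pblock trivI_E (subsetP FE _ eF) je).
by exists (pblock E j) => //; rewrite mem_pblock cover_E inE.
Qed.

Lemma mate_occupied (x : {set J}) (F : {set {set J}}) j : x \subset A -> F \subset E ->
  (mate j \in occupied x F) = (j \in occupied x F).
Proof.
move=> xA FE; case: (boolP (j \in A)) => jA; first by rewrite mate_A.
rewrite !in_occupied // (negbTE jA) (negbTE (mate_notin_A jA)).
by case: (mate_spec jA) => _ _ _ ->.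
Qed.

Definition valid (x : {set J}) (F : {set {set J}}) :=
  ~~ [exists v, 2 <= degF vtx x F v].

Lemma degF_fibre (x : {set J}) (F : {set {set J}}) v :
  degF vtx x F v = #|fibre vtx (occupied x F) v|.
Proof. by []. Qed.

Lemma valid_fibre (x : {set J}) (F : {set {set J}}) : valid x F -> forall v, #|fibre vtx (occupied x F) v| <= 1.
Proof. by move=> /existsPn h v; rewrite leqNgt; exact: h v. Qed.

Definition weight (x : {set J}) (F : {set {set J}}) := wtG vtx w lam x F.

Lemma weight_valid (x : {set J}) (F : {set {set J}}) : valid x F ->
  weight x F = ((\prod_(v | #|fibre vtx (occupied x F) v| == 0) lam v) * \prod_(e in F) w e)%R.
Proof. by move=> h; rewrite /weight /wtG (negbTE h). Qed.

Lemma weight_invalid (x : {set J}) (F : {set {set J}}) : ~~ valid x F -> weight x F = 0%R.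
Proof. by rewrite /valid negbK /weight /wtG => ->. Qed.

Lemma weight_ge0 (x : {set J}) (F : {set {set J}}) : F \subset E -> (0 <= weight x F)%R.
Proof.
move=> FE; rewrite /weight /wtG; case: ifP => _ //.
case: circuit => _ _ w_ge0 lam_ge0.
by apply: mulr_ge0; apply: prodr_ge0 => // e eF; apply: w_ge0; apply: (subsetP FE).
Qed.

Definition pair_conf := ({set {set J}} * {set {set J}})%type.

Definition good_pair (x y : {set J}) (p : pair_conf) :=
  [&& p.1 \subset E, p.2 \subset E, valid x p.1 & valid y p.2].

Definition disagreement (x y : {set J}) (p : pair_conf) := symdiff (occupied x p.1) (occupied y p.2).

Lemma disagreement_fibre (x y : {set J}) (p : pair_conf) : valid x p.1 -> valid y p.2 ->
  forall v, #|fibre vtx (disagreement x y p) v| <= 2.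
Proof.
move=> v1 v2 v.
have sub : fibre vtx (disagreement x y p) v \subset
           fibre vtx (occupied x p.1) v :|: fibre vtx (occupied y p.2) v.
  apply/subsetP => j; rewrite !inE.
  by case: (j \in x); case: (j \in y); case: (j \in cover p.1); case: (j \in cover p.2);
     case: (vtx j == v).
apply: leq_trans (subset_leq_card sub) _; rewrite cardsU.
apply: leq_trans (leq_subr _ _) _.
by have := valid_fibre v1 v; have := valid_fibre v2 v; lia.
Qed.

Lemma disagreement_A (x y : {set J}) (p : pair_conf) : x \subset A -> y \subset A -> p.1 \subset E -> p.2 \subset E ->
  disagreement x y p :&: A = symdiff x y.
Proof.
move=> xA yA p1 p2; apply/setP => j.
rewrite inE !in_symdiff !in_occupied //; case: (boolP (j \in A)) => jA; rewrite ?andbT ?andbF //.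
have -> : (j \in x) = false by apply/negbTE; apply: contra jA; apply: (subsetP xA).
by have -> : (j \in y) = false by apply/negbTE; apply: contra jA; apply: (subsetP yA).
Qed.

(* Walking along K: go to the other incidence at the vertex, then along
   the internal edge.  Orbits are alternating paths and cycles. *)
Definition step (K : {set J}) := inv_product mate (vertex_mate vtx K).

Definition path_matching (K : {set J}) :=
  equivalence_partition (fconnect (step K)) (K :&: A).

Lemma path_matching_match (x y : {set J}) (p : pair_conf) : x \subset A -> y \subset A -> good_pair x y p ->
  Match' (symdiff x y) (path_matching (disagreement x y p)).
Proof.
move=> xA yA /and4P[p1 p2 v1 v2].
have le2 := disagreement_fibre v1 v2.
have inj := inv_product_inj mateK (vertex_mateK le2).
apply/andP; split.
  rewrite -(disagreement_A xA yA p1 p2); apply: equivalence_partitionP.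
  move=> a b c _ _ _; split; first exact: connect0.
  by move=> ab; apply: (same_connect (fconnect_sym inj) ab c).
apply/forall_inP => S /imsetP[a0 a0D ->]; set S0 := [set _ in _ | _].
have ge1 : 0 < #|S0| by apply/card_gt0P; exists a0; rewrite inE a0D connect0.
have a0A : a0 \in A by move: a0D; rewrite inE => /andP[].
have S0_le2 : #|S0| <= 2.
  apply: leq_trans (card_inv1_fixed_in_orbit mateK (vertex_mateK le2) (mate_A a0A)).
  apply: subset_leq_card; apply/subsetP => b; rewrite !inE => /andP[/andP[_ bA] ab].
  by rewrite /step in ab; rewrite ab mate_A // eqxx.
by move: ge1 S0_le2; case: #|S0| => [|[|[|]]].
Qed.

Definition orbit_of (K S : {set J}) := [set b | [exists a in S, fconnect (step K) a b]].
Definition orbit_edges (K S : {set J}) := [set e in E | e \subset orbit_of K S].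

Definition flip (x y S : {set J}) (p : pair_conf) : pair_conf :=
  (symdiff p.1 (orbit_edges (disagreement x y p) S),
   symdiff p.2 (orbit_edges (disagreement x y p) S)).

Lemma symdiff_orbit_edges (K S : {set J}) (F : {set {set J}}) :
  F \subset E -> symdiff F (orbit_edges K S) \subset E.
Proof.
move=> FE; apply: symdiff_subset => //.
by apply/subsetP => e; rewrite inE => /andP[].
Qed.

Section Flip.
Variables (x y : {set J}) (p : pair_conf) (S : {set J}) (a0 : J).
Hypotheses (xA : x \subset A) (yA : y \subset A) (good : good_pair x y p).
Local Notation K := (disagreement x y p).
Local Notation P := (occupied x p.1).
Local Notation Q := (occupied y p.2).
Local Notation rho := (step K).
Hypotheses (a0KA : a0 \in K :&: A) (S_def : S = [set b in K :&: A | fconnect rho a0 b]).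

Let p1E : p.1 \subset E. Proof. by case/and4P: good. Qed.
Let p2E : p.2 \subset E. Proof. by case/and4P: good. Qed.
Let v1 : valid x p.1. Proof. by case/and4P: good. Qed.
Let v2 : valid y p.2. Proof. by case/and4P: good. Qed.
Let le2 := disagreement_fibre v1 v2.
Let a0A : a0 \in A. Proof. by move: a0KA; rewrite inE => /andP[]. Qed.

Local Notation O := (orbit_of K S).

Lemma orbit_ofE : O = [set b | fconnect rho a0 b].
Proof.
apply/setP => b; rewrite !inE; apply/existsP/idP => [[a /andP[aS ab]]|ab].
  by move: aS; rewrite S_def inE => /andP[_ a0a]; apply: connect_trans a0a ab.
by exists a0; rewrite ab andbT S_def inE a0KA connect0.
Qed.

Lemma orbit_sub b : b \in O -> b \in K.
Proof.
have mate_in j : (mate j \in K) = (j \in K) by rewrite !in_symdiff !mate_occupied.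
have step_in j : (rho j \in K) = (j \in K).
  by rewrite /step /inv_product mate_in vertex_mate_in.
rewrite orbit_ofE inE => ab; rewrite -(iter_findex ab).
elim: (findex rho a0 b) => [|k IH]; last by rewrite iterS step_in.
by move: a0KA; rewrite inE => /andP[].
Qed.

Lemma orbit_mate b : b \in O -> mate b \in O.
Proof. by rewrite !orbit_ofE !inE; exact: (orbit_inv1_closed mateK (vertex_mateK le2) (mate_A a0A)). Qed.

Lemma orbit_vertex_mate b : b \in O -> vertex_mate vtx K b \in O.
Proof.
move=> bO; have rbO : rho b \in O.
  by move: bO; rewrite !orbit_ofE !inE => ab; apply: connect_trans ab (fconnect1 _ b).
by have := orbit_mate rbO; rewrite /step /inv_product mateK.
Qed.

Lemma orbit_A j : j \in A -> (j \in O) = (j \in S).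
Proof.
move=> jA; apply/idP/idP => h.
  rewrite S_def; apply/setIdP; split; first by apply/setIP; split=> //; exact: orbit_sub.
  by move: h; rewrite orbit_ofE inE.
by rewrite orbit_ofE inE; move: h; rewrite S_def => /setIdP[].
Qed.

Lemma block_sub_A : S \subset A.
Proof. by apply/subsetP => b; rewrite S_def => /setIdP[/setIP[]]. Qed.

Lemma fibre_toggle_orbit (X Y : {set J}) : K = symdiff X Y -> forall v,
  fibre vtx (symdiff X O) v =
    if [exists j in O, vtx j == v] then fibre vtx Y v else fibre vtx X v.
Proof.
move=> KXY v; case: (boolP [exists j in O, vtx j == v]) => [/exists_inP[k kO /eqP kv]|none].
  have dK := fibre_vertex_mate le2 (orbit_sub kO); rewrite kv in dK.
  apply/setP => j; rewrite !in_fibre in_symdiff.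
  case vj: (vtx j == v); rewrite ?andbF ?andbT //.
  have -> : (j \in O) = (j \in K).
    apply/idP/idP => [|jK]; first exact: orbit_sub.
    have : j \in fibre vtx K v by rewrite in_fibre jK vj.
    by rewrite dK in_set2 => /orP[] /eqP ->; [exact: kO | exact: orbit_vertex_mate].
  by rewrite KXY in_symdiff addbA addbb.
apply/setP => j; rewrite !in_fibre in_symdiff.
case vj: (vtx j == v); rewrite ?andbF ?andbT //.
case jO: (j \in O); rewrite ?addbF //.
by move/exists_inP: none; case; exists j.
Qed.

Lemma occupied_flip (z : {set J}) (F : {set {set J}}) : z \subset A -> F \subset E ->
  occupied (symdiff z S) (symdiff F (orbit_edges K S)) = symdiff (occupied z F) O.
Proof.
move=> zA FE.
have zSA := symdiff_subset zA block_sub_A.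
apply/setP => j; rewrite in_symdiff !in_occupied // ?symdiff_orbit_edges //.
case: (boolP (j \in A)) => jA; first by rewrite in_symdiff orbit_A.
rewrite in_symdiff; congr (_ (+) _).
case: (mate_spec jA) => eE de _ _.
rewrite inE eE de /= subUset !sub1set.
by apply/andP/idP => [[] //|jO]; split => //; exact: orbit_mate.
Qed.

Let occ1 : occupied (symdiff x S) (flip x y S p).1 = symdiff P O.
Proof. exact: occupied_flip. Qed.
Let occ2 : occupied (symdiff y S) (flip x y S p).2 = symdiff Q O.
Proof. exact: occupied_flip. Qed.

Lemma disagreement_flip : disagreement (symdiff x S) (symdiff y S) (flip x y S p) = K.
Proof.
rewrite /disagreement occ1 occ2; apply/setP => j.
by rewrite !in_symdiff; case: (j \in P); case: (j \in Q); case: (j \in O).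
Qed.

Lemma good_pair_flip : good_pair (symdiff x S) (symdiff y S) (flip x y S p).
Proof.
apply/and4P; split; rewrite /flip /=; try exact: symdiff_orbit_edges.
  apply/existsPn => v; rewrite degF_fibre -/(flip x y S p).1 occ1.
  by rewrite (fibre_toggle_orbit (erefl K)) -leqNgt; case: ifP => _; apply: valid_fibre.
apply/existsPn => v; rewrite degF_fibre -/(flip x y S p).2 occ2.
by rewrite (fibre_toggle_orbit (symdiffC P Q)) -leqNgt; case: ifP => _; apply: valid_fibre.
Qed.

Lemma flipK : flip (symdiff x S) (symdiff y S) S (flip x y S p) = p.
Proof. by rewrite {1}/flip disagreement_flip /= !symdiffK; case: p. Qed.

(* Flipping exchanges, vertex by vertex and edge by edge, the factors
   contributed by the two configurations along the orbit. *)
Lemma weight_flip :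
  (weight (symdiff x S) (flip x y S p).1 * weight (symdiff y S) (flip x y S p).2
   = weight x p.1 * weight y p.2)%R.
Proof.
have [_ _ v1' v2'] := and4P good_pair_flip.
rewrite !weight_valid // occ1 occ2 mulrACA [RHS]mulrACA.
congr (GRing.mul _ _).
  rewrite !mulr_prod_cond; apply: eq_bigr => v _.
  rewrite (fibre_toggle_orbit (erefl K)) (fibre_toggle_orbit (symdiffC P Q)).
  by case: (boolP [exists j in O, vtx j == v]) => _; [exact: mulrC|].
rewrite !mulr_prod_cond; apply: eq_bigr => e _; rewrite /flip /= !in_symdiff.
case eO: (e \in orbit_edges K S); rewrite ?addbF //.
have [eE esub] : e \in E /\ e \subset O by move: eO; rewrite inE => /andP[].
have /card_gt0P[j je] : 0 < #|e| by rewrite card_edge.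
have jA : j \notin A.
  have : j \in cover E by apply/bigcupP; exists e.
  by rewrite cover_E inE.
have := orbit_sub (subsetP esub _ je).
rewrite in_symdiff !in_occupied // (negbTE jA) (def_pblock trivI_E eE je).
by case: (e \in p.1); case: (e \in p.2) => //= _; rewrite mulrC.
Qed.

End Flip.

Lemma flip_spec (x y S : {set J}) (M : {set {set J}}) (p : pair_conf) :
  x \subset A -> y \subset A -> good_pair x y p ->
  path_matching (disagreement x y p) = M -> S \in M ->
  [/\ good_pair (symdiff x S) (symdiff y S) (flip x y S p),
      path_matching (disagreement (symdiff x S) (symdiff y S) (flip x y S p)) = M,
      (weight (symdiff x S) (flip x y S p).1 * weight (symdiff y S) (flip x y S p).2
        = weight x p.1 * weight y p.2)%R
    & flip (symdiff x S) (symdiff y S) S (flip x y S p) = p].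
Proof.
move=> xA yA gp <- /imsetP[a0 a0D S_def]; split.
- exact: good_pair_flip xA yA gp a0D S_def.
- by rewrite (disagreement_flip xA yA gp a0D S_def).
- exact: weight_flip xA yA gp a0D S_def.
- exact: flipK xA yA gp a0D S_def.
Qed.

Definition winding (x y : {set J}) (M : {set {set J}}) :=
  (\sum_(p | good_pair x y p && (path_matching (disagreement x y p) == M))
     (weight x p.1 * weight y p.2))%R.

Lemma winding_ge0 (x y : {set J}) (M : {set {set J}}) : (0 <= winding x y M)%R.
Proof.
apply: sumr_ge0 => p /andP[/and4P[p1 p2 _ _] _].
by apply: mulr_ge0; apply: weight_ge0.
Qed.

Lemma signature_mul (x y : {set J}) : x \subset A -> y \subset A ->
  (signature vtx E w lam x * signature vtx E w lam y =
   \sum_(M | Match' (symdiff x y) M) winding x y M)%R.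
Proof.
move=> xA yA; rewrite /signature big_distrlr /= pair_big_dep /=.
have wt0 z F : ~~ valid z F -> wtG vtx w lam z F = 0%R by exact: weight_invalid.
transitivity (\sum_(p | good_pair x y p) (weight x p.1 * weight y p.2))%R.
  rewrite [RHS]big_mkcond [LHS]big_mkcond; apply: eq_bigr => p _.
  rewrite /good_pair; case: (p.1 \subset E); case: (p.2 \subset E) => //=.
  case v1: (valid x p.1); case v2: (valid y p.2) => //=.
  - by rewrite (wt0 y) ?v2 // mulr0.
  - by rewrite (wt0 x) ?v1 // mul0r.
  - by rewrite (wt0 x) ?v1 // mul0r.
rewrite (partition_big (fun p => path_matching (disagreement x y p)) (Match' (symdiff x y))) //.
by move=> p gp; apply: path_matching_match.
Qed.

Lemma winding_flip (x y S : {set J}) (M : {set {set J}}) : x \subset A -> y \subset A -> Match' (symdiff x y) M ->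
  S \in M -> winding x y M = winding (symdiff x S) (symdiff y S) M.
Proof.
move=> xA yA HM SM.
have S_sub : S \subset symdiff x y.
  by case/andP: HM => /and3P[/eqP <- _ _] _; apply: bigcup_sup.
have SA : S \subset A := subset_trans S_sub (symdiff_subset xA yA).
have x'A := symdiff_subset xA SA; have y'A := symdiff_subset yA SA.
rewrite /winding [RHS](reindex_onto (flip x y S) (flip (symdiff x S) (symdiff y S) S)) /=.
  apply: eq_big => [p|p /andP[gp /eqP Mp]].
    apply/andP/andP => [[gp /eqP Mp]|[/andP[gq /eqP Mq] /eqP back]].
      by have [-> -> _ ->] := flip_spec xA yA gp Mp SM; rewrite eqxx.
    have [g'' M'' _ _] := flip_spec x'A y'A gq Mq SM.
    by rewrite !symdiffK back in g'' M''; rewrite g'' M'' eqxx.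
  by have [_ _ -> _] := flip_spec xA yA gp Mp SM.
move=> q /andP[gq /eqP Mq].
by have [_ _ _] := flip_spec x'A y'A gq Mq SM; rewrite !symdiffK.
Qed.

End MatchingsCircuit.

Theorem lemma18 (J V : finType) (vtx : J -> V) (A : {set J})
  (E : {set {set J}}) (w : {set J} -> rat) (lam : V -> rat) :
  is_matching_circuit vtx A E w lam ->
  windable A (signature vtx E w lam).
Proof.
move=> circuit; exists (winding vtx A E w lam); split.
- by move=> x y M _ _ _; exact: winding_ge0.
- by move=> x y xA yA; exact: signature_mul.
- by move=> x y S M xA yA HM SM; exact: winding_flip.
Qed.
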